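(* Let $\psi\in\mathcal K$ have radius of convergence $R_\psi>0$ and Khinchin family $(Y_t)$. For $t\in(0,R_\psi)$ let $q(t)$ be the extinction probability of the Galton–Watson process with offspring distribution $Y_t$, and $q(0)=1$. Then $q$ is continuous on $[0,R_\psi)$.
   Context: $\mathcal K$ is the class of non-constant power series $f(z)=\sum_{n\ge0}a_nz^n$ with positive radius of convergence $R$, non-negative coefficients and $a_0>0$; its Khinchin family $(X_t)_{t\in[0,R)}$ is given by $\mathbf P(X_t=n)=a_nt^n/f(t)$ for $n\ge0$, $t\in(0,R)$, and $X_0\equiv0$ (so the process with offspring $Y_0$ is a single node and goes extinct, consistently with $q(0)=1$). The extinction probability is the probability that the Galton–Watson tree is finite. *)

From HB Require Import structures.
From mathcomp Require Import all_boot all_order all_algebra.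
From mathcomp Require Import all_classical all_reals all_analysis.
Set Implicit Arguments. Unset Strict Implicit. Unset Printing Implicit Defensive.
Import Order.TTheory GRing.Theory Num.Theory.
Import numFieldNormedType.Exports.
Local Open Scope classical_set_scope.
Local Open Scope ring_scope.

Section Defs.
Variable R : realType.

(* The class K: non-constant power series, nonnegative coefficients, a_0 > 0
   (positive ps_radius of convergence is a separate hypothesis). *)
Definition in_K (a : nat -> R) : Prop :=
  [/\ forall n, 0 <= a n, 0 < a 0%N & exists n, (0 < n)%N /\ 0 < a n].

(* ps_radius of convergence (restricted to nonnegative reals, which suffices
   since coefficients are nonnegative), as an extended real *)
Definition ps_radius (a : nat -> R) : \bar R :=
  ereal_sup [set t%:E | t in
     [set t : R | 0 <= t /\ cvgn (series (fun n => a n * t ^+ n)) ]].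

Definition psum (a : nat -> R) (t : R) : R := limn (series (fun n => a n * t ^+ n)).

Definition khinchin (a : nat -> R) (t : R) (n : nat) : R :=
  a n * t ^+ n / psum a t.

Fixpoint conv_pow (p : nat -> R) (j : nat) : nat -> R :=
  match j with
  | 0%N => fun k => (k == 0%N)%:R
  | j'.+1 => fun k => \sum_(i < k.+1) p i * conv_pow p j' (k - i)%N
  end.

(* law of the n-th generation size Z_n of the Galton-Watson process with
   offspring law p, started from one individual (Z_0 = 1) *)
Fixpoint gen_law (p : nat -> R) (n : nat) : nat -> R :=
  match n with
  | 0%N => fun k => (k == 1%N)%:R
  | n'.+1 => fun k => limn (series (fun j => gen_law p n' j * conv_pow p j k))
  end.

(* extinction probability: P(tree finite) = P(U_n {Z_n = 0}) = lim_n P(Z_n = 0)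
   (the events {Z_n = 0} are increasing) *)
Definition extinction_prob (p : nat -> R) : R := limn (fun n => gen_law p n 0%N).

Definition q_ext (a : nat -> R) (t : R) : R :=
  if t == 0 then 1 else extinction_prob (khinchin a t).

End Defs.

From HB Require Import structures.
From mathcomp Require Import all_boot all_order all_algebra.
From mathcomp Require Import all_classical all_reals all_analysis.
From mathcomp Require Import ring lra.
Import Order.TTheory GRing.Theory Num.Theory.
Import numFieldNormedType.Exports.
Set Implicit Arguments. Unset Strict Implicit. Unset Printing Implicit Defensive.
Local Open Scope classical_set_scope.
Local Open Scope ring_scope.

(* For [0 <= t] below the radius of convergence, the offspring law [Y_t] has generating
   function [f_t s = psi (t s) / psi t], and [q t] is the limit of the increasing iterates
   [f_t^n 0]; this also holds at [t = 0], where [f_0] is constantly [1].  Each iterate is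
   Lipschitz in [t] on compact subintervals, so [q], a supremum of continuous functions, is
   lower semicontinuous.  For upper semicontinuity at [t0] with [q t0 < 1] (hence [t0 > 0]):
   [q t0] is a fixed point of [f_t0], and [f_t0] lies strictly below the diagonal on
   [(q t0, 1)]; so for [s] slightly above [q t0] we get [f_t s <= s] for [t] near [t0] by
   continuity in [t], whence [q t <= s]. *)

Section NonnegativeSeries.
Variable R : realType.
Local Open Scope ereal_scope.
Implicit Types u v : nat -> R.

Definition eser u : \bar R := \sum_(k <oo) (u k)%:E.

Lemma nneseries_ge_term (w : nat -> \bar R) m : (forall k, 0 <= w k) ->
  w m <= \sum_(k <oo) w k.
Proof.
move=> w0; apply: le_trans (nneseries_lim_ge m.+1 _); last by move=> k _ _.
by rewrite big_nat_recr //= leeDr // sume_ge0.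
Qed.

Lemma eser_ge0 u : (forall k, (0 <= u k)%R) -> 0 <= eser u.
Proof. by move=> u0; apply: nneseries_ge0 => k _ _; rewrite lee_fin. Qed.

Lemma le_eser u v : (forall k, (0 <= u k)%R) -> (forall k, (u k <= v k)%R) ->
  eser u <= eser v.
Proof. by move=> u0 uv; apply: lee_nneseries => [k _ _|k _]; rewrite lee_fin. Qed.

Lemma eser_term u m : (forall k, (0 <= u k)%R) -> (u m)%:E <= eser u.
Proof. by move=> u0; apply: nneseries_ge_term => k; rewrite lee_fin. Qed.

Lemma eser_limn u : cvgn (series u) -> eser u = (limn (series u))%:E.
Proof.
move=> cu; rewrite /eser -EFin_lim //; congr (limn _); apply/funext => n /=.
by rewrite /series /= sumEFin.
Qed.

Lemma eser_finsupp u N : (forall k, (0 <= u k)%R) -> (forall k, (N <= k)%N -> u k = 0%R) ->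
  eser u = (\sum_(k < N) u k)%:E.
Proof.
move=> u0 uN; rewrite /eser (nneseries_split 0 N); last by move=> k _; rewrite lee_fin.
rewrite add0n eseries0 ?adde0; last by move=> k kN _; rewrite uN.
by rewrite sumEFin big_mkord.
Qed.

Lemma eserZ c u : (0 <= c)%R -> (forall k, (0 <= u k)%R) ->
  eser (fun k => c * u k)%R = c%:E * eser u.
Proof.
move=> c0 u0; rewrite /eser -nneseriesZl; last by move=> k _; rewrite lee_fin.
by apply: eq_eseriesr => k _; rewrite EFinM.
Qed.

Lemma eserD u v : (forall k, (0 <= u k)%R) -> (forall k, (0 <= v k)%R) ->
  eser (fun k => u k + v k)%R = eser u + eser v.
Proof.
move=> u0 v0; rewrite /eser -nneseriesD; last 2 first.
- by move=> k _ _; rewrite lee_fin.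
- by move=> k _ _; rewrite lee_fin.
by apply: eq_eseriesr => k _; rewrite EFinD.
Qed.

Lemma eser_cauchy_product u v c : (forall k, (0 <= u k)%R) -> (forall k, (0 <= v k)%R) ->
  eser v = c%:E -> eser (fun k => \sum_(i < k.+1) u i * v (k - i)%N)%R = eser u * c%:E.
Proof.
move=> u0 v0 vc.
pose h i k := if (i <= k)%N then (u i * v (k - i)%N)%:E else 0.
have h0 i k : 0 <= h i k by rewrite /h; case: ifP => // _; rewrite lee_fin mulr_ge0.
transitivity (\sum_(k <oo) \sum_(i <oo) h i k).
  apply: eq_eseriesr => k _; rewrite -sumEFin.
  rewrite (nneseries_split 0 k.+1) // add0n eseries0 ?adde0; last first.
    by move=> i ki _; rewrite /h leqNgt ki.
  by rewrite big_mkord; apply: eq_bigr => i _; rewrite /h -ltnS ltn_ord.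
rewrite nneseries_interchange // muleC /eser -nneseriesZl; last by move=> i _; rewrite lee_fin.
apply: eq_eseriesr => i _.
rewrite (nneseries_split 0 i) // add0n big1_seq ?add0e; last first.
  by move=> k /andP[_]; rewrite mem_index_iota => /andP[_ ki]; rewrite /h leqNgt ki.
rewrite -nneseries_addn // -vc muleC -nneseriesZl; last by move=> k _; rewrite lee_fin.
by apply: eq_eseriesr => k _; rewrite /h leq_addl addnK EFinM.
Qed.

End NonnegativeSeries.

Section Powers.
Variable R : realFieldType.

(* [(1 - q)] times the height of the chord of [x ^+ k] over [[q, 1]] above the graph at [s] *)
Definition pow_chord_gap (q s : R) k := (1 - s) * q ^+ k + (s - q) - (1 - q) * s ^+ k.

Lemma pow_chord_gapE q s k : pow_chord_gap q s k =
  (1 - s) * (s - q) * \sum_(i < k) (s ^+ i - s ^+ (k.-1 - i) * q ^+ i).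
Proof.
have := subrXX s q k; have := subrXX 1 s k; rewrite expr1n.
set A := \sum_(i < k) _; set B := \sum_(i < k) _ => eB eA.
have -> : \sum_(i < k) (s ^+ i - s ^+ (k.-1 - i) * q ^+ i) = A - B.
  by rewrite /A /B -sumrB; apply: eq_bigr => i _; rewrite expr1n mul1r.
transitivity ((s - q) * ((1 - s) * A) - (1 - s) * ((s - q) * B)); last by ring.
by rewrite -eA -eB /pow_chord_gap; ring.
Qed.

Lemma pow_chord_gap_ge0 q s k : 0 <= q -> q <= s -> s <= 1 -> 0 <= pow_chord_gap q s k.
Proof.
move=> q0 qs s1; have s0 := le_trans q0 qs.
rewrite pow_chord_gapE !mulr_ge0 ?subr_ge0 //.
apply: sumr_ge0 => i _; rewrite subr_ge0.
have ik : (i <= k.-1)%N by rewrite -ltnS prednK ?ltn_ord // (leq_ltn_trans _ (ltn_ord i)).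
apply: (@le_trans _ _ (s ^+ k.-1)); last by rewrite ler_wiXn2l.
by rewrite -{2}(subnK ik) exprD ler_wpM2l ?exprn_ge0 // lerXn2r // nnegrE.
Qed.

Lemma pow_chord_gap_gt0 q s k : 0 <= q -> q < s -> s < 1 -> (2 <= k)%N ->
  0 < pow_chord_gap q s k.
Proof.
move=> q0 qs s1; have s0 := le_trans q0 (ltW qs).
case: k => [|k] // k_ge2; rewrite pow_chord_gapE !mulr_gt0 ?subr_gt0 //.
rewrite big_ord_recl /= subn0 expr0 mulr1 -[ltLHS](addr0 0) ltr_leD //.
  by rewrite subr_gt0 exprn_ilt1 //; case: k k_ge2.
apply: sumr_ge0 => i _; rewrite subr_ge0.
apply: (@le_trans _ _ (s ^+ k)); last by rewrite ler_wiXn2l // ltW.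
have ik : (bump 0 i <= k)%N by rewrite /bump /= add1n ltn_ord.
have -> : s ^+ k = s ^+ (k - bump 0 i) * s ^+ bump 0 i by rewrite -exprD subnK.
by rewrite ler_wpM2l ?exprn_ge0 // lerXn2r // ?nnegrE // ltW.
Qed.

Lemma subrX_slope_le (x y r r' : R) k : 0 <= x -> x <= y -> y <= r -> r <= r' ->
  (y ^+ k - x ^+ k) * (r' - r) <= (r' ^+ k - r ^+ k) * (y - x).
Proof.
move=> x0 xy yr rr'; have y0 := le_trans x0 xy; have r0 := le_trans y0 yr.
rewrite !subrXX mulrAC [leRHS]mulrAC (mulrC (r' - r)) -!mulrA.
rewrite !ler_wpM2l ?subr_ge0 //; apply: ler_sum => i _.
have y_r' := le_trans yr rr'; have x_r := le_trans xy yr; have r'0 := le_trans r0 rr'.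
by rewrite ler_pM ?exprn_ge0 ?lerXn2r ?nnegrE.
Qed.

End Powers.

Section LipschitzContinuity.
Variable R : realFieldType.

Lemma lipschitz_near (A : set R) (f : R -> R) (k x e : R) :
  k.-lipschitz_A f -> A x -> 0 < e -> \forall y \near x, A y -> `|f x - f y| < e.
Proof.
move=> f_lip Ax e0; have k1 : 0 < `|k| + 1 by rewrite ltr_pwDr.
apply: filterS (cvgr_dist_lt _ _ (@cvg_id _ (nbhs x)) _ (divr_gt0 e0 k1)) => y xy Ay.
apply: le_lt_trans (f_lip (x, y) (conj Ax Ay)) _.
move: xy; rewrite /= ltr_pdivlMr // => xy.
by have := normr_ge0 (x - y); have := ler_norm k; nra.
Qed.

Lemma lipschitz_within_continuous (A : set R) (f : R -> R) (k : R) :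
  k.-lipschitz_A f -> {within A, continuous f}.
Proof.
move=> f_lip; apply/subspace_continuousP => x Ax; apply/cvgrPdist_lt => e e0.
by rewrite near_withinE; apply: lipschitz_near f_lip Ax e0.
Qed.

End LipschitzContinuity.

Section IterationLimit.
Variable R : realType.

Definition iter_lim (f : R -> R) : R := limn (fun n => iter n f 0).

Variable f : R -> R.
Hypothesis f_itv : forall s, 0 <= s <= 1 -> 0 <= f s <= 1.
Hypothesis f_homo : forall s s', 0 <= s -> s <= s' -> s' <= 1 -> f s <= f s'.

Lemma iter_itv n : 0 <= iter n f 0 <= 1.
Proof. by elim: n => [|n IH] /=; [rewrite lexx ler01 | exact: f_itv]. Qed.

Lemma iter_nondecreasing : nondecreasing_seq (fun n => iter n f 0).
Proof.
apply/nondecreasing_seqP; elim=> [|n IH]; first by have /andP[] := iter_itv 1.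
have /andP[? _] := iter_itv n; have /andP[_ ?] := iter_itv n.+1.
exact: f_homo.
Qed.

Lemma iter_cvg : cvgn (fun n => iter n f 0).
Proof.
apply: nondecreasing_is_cvgn; first exact: iter_nondecreasing.
by exists 1 => _ [n _ <-]; have /andP[] := iter_itv n.
Qed.

Lemma iter_le_lim n : iter n f 0 <= iter_lim f.
Proof. exact: nondecreasing_cvgn_le iter_nondecreasing iter_cvg n. Qed.

Lemma iter_lim_itv : 0 <= iter_lim f <= 1.
Proof.
rewrite (le_trans _ (iter_le_lim 0)) //=.
by apply: limr_le iter_cvg _; apply: nearW => n; have /andP[] := iter_itv n.
Qed.

Lemma iter_lim_approx e : 0 < e -> exists n, iter_lim f - e < iter n f 0.
Proof.
move=> /(cvgr_dist_lt _ _ iter_cvg) [N _ near_lim]; exists N.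
have := near_lim N (leqnn N); rewrite ger0_norm ?subr_ge0 ?iter_le_lim //.
by rewrite ltrBlDr addrC -ltrBlDr.
Qed.

Lemma iter_lim_le s : 0 <= s <= 1 -> f s <= s -> iter_lim f <= s.
Proof.
move=> /andP[s0 s1] fs_le; apply: limr_le iter_cvg _; apply: nearW.
elim=> [//|n IH] /=; apply: le_trans fs_le.
by apply: f_homo IH s1; have /andP[] := iter_itv n.
Qed.

Hypothesis f_cont : {within `[0, 1], continuous f}.

Lemma iter_lim_fixed : f (iter_lim f) = iter_lim f.
Proof.
set u := fun n => iter n f 0; have u_cvg : u @ \oo --> iter_lim f := iter_cvg.
have u_within : u @ \oo --> within `[0, 1] (nbhs (iter_lim f)).
  move=> P /u_cvg; apply: (@filterS _ \oo) => n /=; apply.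
  by rewrite in_itv /= iter_itv.
have f_lim : f @ within `[0, 1] (nbhs (iter_lim f)) --> f (iter_lim f).
  by apply: (subspace_continuousP _ f).1 f_cont (iter_lim f) _; rewrite /= in_itv /= iter_lim_itv.
have : [sequence u n.+1]_n @ \oo --> f (iter_lim f) := cvg_comp _ _ u_within f_lim.
by rewrite cvg_shiftS => /(cvg_lim _) <-.
Qed.

End IterationLimit.

Section GeneratingFunction.
Variable R : realType.
Variable p : nat -> R.
Hypothesis p_ge0 : forall k, 0 <= p k.
Hypothesis p_sum1 : eser p = 1%:E.

Definition pgf (s : R) : R := fine (eser (fun k => p k * s ^+ k)).

Let pX_ge0 s : 0 <= s -> forall k, 0 <= p k * s ^+ k.
Proof. by move=> s0 k; rewrite mulr_ge0 ?exprn_ge0. Qed.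

Let eser_pX_le1 s : 0 <= s <= 1 -> (eser (fun k => p k * s ^+ k)%R <= 1%:E)%E.
Proof.
move=> /andP[s0 s1]; rewrite -p_sum1; apply: le_eser (pX_ge0 s0) _ => k.
by rewrite ler_piMr ?exprn_ile1.
Qed.

Lemma eser_pgf s : 0 <= s <= 1 -> eser (fun k => p k * s ^+ k) = (pgf s)%:E.
Proof.
move=> s01; have /andP[s0 _] := s01.
rewrite /pgf fineK // ge0_fin_numE ?eser_ge0 ?(le_lt_trans (eser_pX_le1 s01)) ?ltry //.
exact: pX_ge0.
Qed.

Lemma pgf_itv s : 0 <= s <= 1 -> 0 <= pgf s <= 1.
Proof.
move=> s01; have /andP[s0 _] := s01.
by rewrite -!lee_fin -eser_pgf // eser_pX_le1 // eser_ge0 //; apply: pX_ge0.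
Qed.

Lemma pgf1 : pgf 1 = 1.
Proof.
by rewrite /pgf (_ : (fun k => _) = p) ?p_sum1 // funeqE => k; rewrite expr1n mulr1.
Qed.

Lemma iter_pgf1 n : iter n pgf 1 = 1.
Proof. by elim: n => //= n ->; rewrite pgf1. Qed.

Lemma pgf_chord q s m : 0 <= q -> q < s -> s < 1 ->
  (1 - q) * pgf s + p m * pow_chord_gap q s m <= (1 - s) * pgf q + (s - q).
Proof.
move=> q0 qs s1; have s0 := le_trans q0 (ltW qs); have q1 := lt_trans qs s1.
have eser_ps := @eser_pgf s (ltac:(by rewrite s0 ltW)).
have eser_pq := @eser_pgf q (ltac:(by rewrite q0 ltW)).
have ps0 := pX_ge0 s0; have pq0 := pX_ge0 q0.
have gap0 k : 0 <= p k * pow_chord_gap q s k by rewrite mulr_ge0 // pow_chord_gap_ge0 // ltW.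
have [s1' q1' sq] : [/\ 0 <= 1 - s, 0 <= 1 - q & 0 <= s - q] by rewrite !subr_ge0 !ltW.
have chord_sum : eser (fun k => (1 - q) * (p k * s ^+ k) + p k * pow_chord_gap q s k)
               = eser (fun k => (1 - s) * (p k * q ^+ k) + (s - q) * p k).
  by congr eser; apply/funext => k; rewrite /pow_chord_gap; ring.
rewrite !eserD ?eserZ ?eser_ps ?eser_pq ?p_sum1 // in chord_sum;
  try by move=> k; rewrite mulr_ge0.
rewrite -lee_fin EFinD (le_trans (leeD2l _ (eser_term _ gap0))) //.
by rewrite chord_sum mule1 -EFinM -EFinD.
Qed.

Lemma pgf_affine : (forall k, (2 <= k)%N -> p k = 0) ->
  forall s, 0 <= s <= 1 -> pgf s = p 0%N + p 1%N * s.
Proof.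
move=> p_deg1 s s01; have /andP[s0 _] := s01; have := eser_pgf s01.
rewrite (@eser_finsupp _ _ 2) => [|k|k k2]; last by rewrite p_deg1 ?mul0r.
- by case=> <-; rewrite big_ord_recr big_ord1 /= expr0 mulr1 expr1.
- exact: pX_ge0.
Qed.

(* Strict convexity of [pgf] when some [p m > 0] with [m >= 2]; otherwise [pgf] is
   affine and [p 0 > 0] forces its only fixed point in [[0, 1]] to be [1]. *)
Lemma pgf_lt_id q s : 0 < p 0%N -> pgf q = q -> 0 <= q -> q < s -> s < 1 -> pgf s < s.
Proof.
move=> p0_gt0 fix_q q0 qs s1; have q1 : 0 < 1 - q by rewrite subr_gt0 (lt_trans qs).
have [[m [m2 pm_gt0]]|] := pselect (exists m, (2 <= m)%N /\ 0 < p m).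
  have := pgf_chord m q0 qs s1; rewrite fix_q => chord.
  have gap_gt0 := mulr_gt0 pm_gt0 (pow_chord_gap_gt0 q0 qs s1 m2).
  by rewrite -(ltr_pM2l q1); lra.
move=> no_m; have p_deg1 k : (2 <= k)%N -> p k = 0.
  by move=> k2; apply/eqP; rewrite eq_le p_ge0 andbT leNgt; apply/negP => pk; apply: no_m; exists k.
have := pgf1; rewrite pgf_affine ?lexx ?ler01 // mulr1 => p01.
move: fix_q; rewrite pgf_affine ?q0 ?(ltW (lt_trans qs s1)) //.
by nra.
Qed.

Lemma conv_pow_ge0 j k : 0 <= conv_pow p j k.
Proof.
elim: j k => [|j IH] k /=; first by case: (k == 0%N).
by apply: sumr_ge0 => i _; rewrite mulr_ge0.
Qed.

Lemma eser_conv_pow j s : 0 <= s <= 1 ->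
  eser (fun k => conv_pow p j k * s ^+ k) = (pgf s ^+ j)%:E.
Proof.
move=> s01; have eser_ps := eser_pgf s01; have /andP[s0 _] := s01.
elim: j => [|j IH].
  rewrite (@eser_finsupp _ _ 1) ?big_ord1 ?mulr1 // => [k|[|k] // _].
    by rewrite mulr_ge0 ?exprn_ge0 //=; case: (k == 0%N).
  by rewrite /= mul0r.
transitivity (eser (fun k => \sum_(i < k.+1)
    (p i * s ^+ i) * (conv_pow p j (k - i)%N * s ^+ (k - i)%N))).
  congr eser; apply/funext => k /=; rewrite mulr_suml; apply: eq_bigr => i _.
  by rewrite mulrACA -exprD subnKC // -ltnS.
rewrite (@eser_cauchy_product _ (fun i => p i * s ^+ i)
  (fun i => conv_pow p j i * s ^+ i) (pgf s ^+ j)) ?eser_ps -?EFinM ?exprS //.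
  exact: pX_ge0.
by move=> k; rewrite mulr_ge0 ?conv_pow_ge0 // exprn_ge0.
Qed.

(* The law of a sum of [N] independent [p]-distributed variables with [N ~ g];
   [gen_law p n.+1] unfolds to [compound (gen_law p n)]. *)
Definition compound (g : nat -> R) (k : nat) : R :=
  limn (series (fun j => g j * conv_pow p j k)).

Section Compound.
Variable g : nat -> R.
Hypothesis g_ge0 : forall j, 0 <= g j.
Hypothesis g_fin : (eser g < +oo)%E.

Let gc_ge0 j k : 0 <= g j * conv_pow p j k.
Proof. by rewrite mulr_ge0 ?conv_pow_ge0. Qed.

Lemma eser_compound_coef k : eser (fun j => g j * conv_pow p j k) = (compound g k)%:E.
Proof.
have total : (\sum_(k <oo) eser (fun j => g j * conv_pow p j k)%R)%E = eser g.
  rewrite /eser nneseries_interchange; last by move=> j i; rewrite lee_fin.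
  apply: eq_eseriesr => j _.
  rewrite -/(eser (fun i => g j * conv_pow p j i)) eserZ //; last exact: conv_pow_ge0.
  have := eser_conv_pow j (s := 1); rewrite lexx ler01 pgf1 expr1n => /(_ isT).
  by under eq_fun do rewrite expr1n mulr1; move=> ->; rewrite mule1.
have coef_fin : (eser (fun j => g j * conv_pow p j k)%R < +oo)%E.
  apply: le_lt_trans g_fin; rewrite -total.
  by apply: nneseries_ge_term => i; apply: eser_ge0.
exact: eser_limn (nnseries_is_cvg (gc_ge0^~ k) coef_fin).
Qed.

Lemma compound_ge0 k : 0 <= compound g k.
Proof. by rewrite -lee_fin -eser_compound_coef (eser_ge0 (gc_ge0^~ k)). Qed.

Lemma eser_compound s : 0 <= s <= 1 ->
  eser (fun k => compound g k * s ^+ k) = eser (fun j => g j * pgf s ^+ j).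
Proof.
move=> s01; have /andP[s0 _] := s01.
transitivity (\sum_(k <oo) \sum_(j <oo) ((g j * conv_pow p j k * s ^+ k)%:E))%E.
  apply: eq_eseriesr => k _; rewrite EFinM -eser_compound_coef muleC -eserZ ?exprn_ge0 //.
  by apply: eq_eseriesr => j _; rewrite mulrC.
rewrite nneseries_interchange; last by move=> j k; rewrite lee_fin mulr_ge0 ?exprn_ge0.
apply: eq_eseriesr => j _.
under eq_eseriesr do rewrite -mulrA.
rewrite -/(eser _) eserZ ?eser_conv_pow -?EFinM // => k.
by rewrite mulr_ge0 ?conv_pow_ge0 ?exprn_ge0.
Qed.

End Compound.

Lemma gen_law_pgf n : (forall k, 0 <= gen_law p n k) /\
  forall s, 0 <= s <= 1 -> eser (fun k => gen_law p n k * s ^+ k) = (iter n pgf s)%:E.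
Proof.
elim: n => [|n [gen_ge0 gen_pgf]].
  split=> [k|s /andP[s0 _]]; first by case: (k == 1%N).
  rewrite (@eser_finsupp _ _ 2) => [|k|[|[|k]] // _].
  - by rewrite big_ord_recr big_ord1 /= mul0r add0r mul1r expr1.
  - by rewrite mulr_ge0 ?exprn_ge0 //=; case: (k == 1%N).
  - by rewrite /= mul0r.
have gen_fin : (eser (gen_law p n) < +oo)%E.
  have := gen_pgf 1; rewrite lexx ler01 iter_pgf1 => /(_ isT).
  by under eq_fun do rewrite expr1n mulr1; move=> ->; rewrite ltry.
split=> [k|s s01]; first exact: compound_ge0.
have pgf_s01 := pgf_itv s01.
by rewrite [LHS](eser_compound gen_ge0 gen_fin s01) gen_pgf // iterSr.
Qed.

Lemma gen_law_extinction n : gen_law p n 0 = iter n pgf 0.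
Proof.
have [gen_ge0 gen_pgf] := gen_law_pgf n.
have := gen_pgf 0 (ltac:(by rewrite lexx ler01)).
rewrite (@eser_finsupp _ _ 1) => [|k|[|k] //= _]; last by rewrite expr0n mulr0.
- by rewrite big_ord1 expr0 mulr1 => -[].
- by rewrite mulr_ge0 // exprn_ge0.
Qed.

End GeneratingFunction.

Section PowerSeries.
Variables (R : realType) (a : nat -> R) (rho : R).
Hypothesis a_ge0 : forall k, 0 <= a k.
Hypothesis a_cvg : cvgn (series (fun k => a k * rho ^+ k)).

Let aX_ge0 x : 0 <= x -> forall k, 0 <= a k * x ^+ k.
Proof. by move=> x0 k; rewrite mulr_ge0 ?exprn_ge0. Qed.

Lemma eser_psum x : 0 <= x <= rho -> eser (fun k => a k * x ^+ k) = (psum a x)%:E.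
Proof.
move=> /andP[x0 x_rho].
have fin : (eser (fun k => a k * x ^+ k)%R < +oo)%E.
  apply: (@le_lt_trans _ _ (eser (fun k => a k * rho ^+ k))); last by rewrite eser_limn ?ltry.
  by apply: le_eser => k; rewrite ?aX_ge0 // ler_wpM2l // lerXn2r ?nnegrE ?(le_trans x0).
exact: eser_limn (nnseries_is_cvg (aX_ge0 x0) fin).
Qed.

Lemma psum_ge_a0 x : 0 <= x <= rho -> a 0%N <= psum a x.
Proof.
move=> x01; have /andP[x0 _] := x01; rewrite -lee_fin -eser_psum //.
by have := eser_term 0 (aX_ge0 x0); rewrite expr0 mulr1.
Qed.

Lemma psum_le x y : 0 <= x -> x <= y -> y <= rho -> psum a x <= psum a y.
Proof.
move=> x0 xy y_rho; have y0 := le_trans x0 xy.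
rewrite -lee_fin -!eser_psum ?x0 ?y0 ?y_rho ?(le_trans xy) //.
by apply: le_eser => k; rewrite ?aX_ge0 // ler_wpM2l // lerXn2r ?nnegrE.
Qed.

Lemma eser_psumB x y : 0 <= x -> x <= y -> y <= rho ->
  eser (fun k => a k * (y ^+ k - x ^+ k)) = (psum a y - psum a x)%:E.
Proof.
move=> x0 xy y_rho; have y0 := le_trans x0 xy.
have d_ge0 k : 0 <= a k * (y ^+ k - x ^+ k).
  by rewrite mulr_ge0 // subr_ge0 lerXn2r ?nnegrE.
have := @eser_psum y (ltac:(by rewrite y0 y_rho)).
rewrite (_ : (fun k => _) = fun k => a k * (y ^+ k - x ^+ k) + a k * x ^+ k); last first.
  by apply/funext => k; ring.
rewrite eserD ?eser_psum ?x0 ?(le_trans xy) // => [|k]; last exact: aX_ge0.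
have : eser (fun k => a k * (y ^+ k - x ^+ k)) \is a fin_num.
  rewrite ge0_fin_numE ?eser_ge0 //.
  apply: (@le_lt_trans _ _ (eser (fun k => a k * y ^+ k))); last by rewrite eser_psum ?y0 ?ltry.
  by apply: le_eser => // k; rewrite ler_wpM2l // lerBlDr lerDl exprn_ge0.
by move=> /fineK <-; rewrite -EFinD => -[<-]; rewrite addrK.
Qed.

Lemma psum_slope_le x y r r' : 0 <= x -> x <= y -> y <= r -> r <= r' -> r' <= rho ->
  (psum a y - psum a x) * (r' - r) <= (psum a r' - psum a r) * (y - x).
Proof.
move=> x0 xy yr rr' r'_rho; have y0 := le_trans x0 xy; have r0 := le_trans y0 yr.
have d_ge0 u v k : 0 <= u -> u <= v -> 0 <= a k * (v ^+ k - u ^+ k).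
  by move=> u0 uv; rewrite mulr_ge0 // subr_ge0 lerXn2r // nnegrE (le_trans u0).
rewrite -lee_fin !EFinM -eser_psumB ?(le_trans yr) ?(le_trans rr') //.
rewrite -eser_psumB // ?(le_trans yr) //.
rewrite muleC -eserZ ?subr_ge0 // => [|k]; last exact: d_ge0.
rewrite muleC -eserZ ?subr_ge0 // => [|k]; last exact: d_ge0.
apply: le_eser => k; first by rewrite mulr_ge0 ?d_ge0 ?subr_ge0.
by rewrite mulrCA [leRHS]mulrCA ler_wpM2l // mulrC [leRHS]mulrC subrX_slope_le.
Qed.

Lemma psum_lipschitz r : 0 <= r -> r < rho ->
  exists2 L, 0 <= L & L.-lipschitz_(`[0, r]) (psum a).
Proof.
move=> r0 r_rho; have r_le_rho := ltW r_rho.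
exists ((psum a rho - psum a r) / (rho - r)); first by rewrite divr_ge0 ?subr_ge0 ?psum_le.
have slope x y : 0 <= x -> x <= y -> y <= r ->
    `|psum a y - psum a x| <= (psum a rho - psum a r) / (rho - r) * `|y - x|.
  move=> x0 xy yr; rewrite !ger0_norm ?subr_ge0 ?psum_le ?(le_trans yr) //.
  by rewrite mulrAC ler_pdivlMr ?subr_gt0 // psum_slope_le.
move=> [x y] /=; rewrite !in_itv /= => -[/andP[x0 xr] /andP[y0 yr]].
have [xy|yx] := leP x y; first by rewrite distrC (distrC x) slope.
by apply: slope => //; exact: ltW.
Qed.

End PowerSeries.

Definition khinchin_pgf (R : realType) (a : nat -> R) (t s : R) : R :=
  psum a (t * s) / psum a t.

Section KhinchinFamily.
Variables (R : realType) (a : nat -> R) (rho : R).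
Hypothesis a_ge0 : forall k, 0 <= a k.
Hypothesis a0_gt0 : 0 < a 0%N.
Hypothesis rho_ge0 : 0 <= rho.
Hypothesis a_cvg : cvgn (series (fun k => a k * rho ^+ k)).

Local Notation F := (khinchin_pgf a).

Let psum_gt0 x : 0 <= x <= rho -> 0 < psum a x.
Proof. by move=> x_in; rewrite (lt_le_trans a0_gt0) ?(psum_ge_a0 a_ge0 a_cvg). Qed.

Let pos_itv t : 0 < t <= rho -> 0 <= t <= rho.
Proof. by move=> /andP[t0 ->]; rewrite ltW. Qed.

Let mul_itv t s : 0 <= t <= rho -> 0 <= s <= 1 -> 0 <= t * s <= t.
Proof. by move=> /andP[t0 _] /andP[s0 s1]; rewrite mulr_ge0 ?ler_piMr. Qed.

Lemma khinchin_pgf_itv t : 0 <= t <= rho -> forall s, 0 <= s <= 1 -> 0 <= F t s <= 1.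
Proof.
move=> t_in s s_in; have /andP[_ t_rho] := t_in.
have /andP[ts0 ts_le] := mul_itv t_in s_in.
have ts_in : 0 <= t * s <= rho by rewrite ts0 (le_trans ts_le).
rewrite /khinchin_pgf divr_ge0 ?(ltW (psum_gt0 _)) //=.
by rewrite ler_pdivrMr ?psum_gt0 // mul1r (psum_le a_ge0 a_cvg).
Qed.

Lemma khinchin_pgf_homo t : 0 <= t <= rho ->
  forall s s', 0 <= s -> s <= s' -> s' <= 1 -> F t s <= F t s'.
Proof.
move=> t_in s s' s0 ss' s'1; have /andP[t0 t_rho] := t_in.
rewrite /khinchin_pgf ler_pM2r ?invr_gt0 ?psum_gt0 //.
rewrite (psum_le a_ge0 a_cvg) ?mulr_ge0 ?ler_wpM2l //.
by rewrite (le_trans _ t_rho) // ler_piMr // (le_trans s0).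
Qed.

Let iter_khinchin_pgf_itv t n : 0 <= t <= rho -> 0 <= iter n (F t) 0 <= 1.
Proof. by move=> t_in; apply/iter_itv/khinchin_pgf_itv. Qed.

Lemma khinchin_pgf0 s : F 0 s = 1.
Proof. by rewrite /khinchin_pgf mul0r divff // gt_eqF // psum_gt0 // lexx. Qed.

Lemma khinchin_ge0 t : 0 < t <= rho -> forall k, 0 <= khinchin a t k.
Proof.
move=> /andP[t0 t_rho] k; have t_in : 0 <= t <= rho by rewrite ltW.
by rewrite /khinchin divr_ge0 ?mulr_ge0 ?exprn_ge0 ?(ltW t0) ?(ltW (psum_gt0 _)).
Qed.

Lemma eser_khinchin_pow t s : 0 < t <= rho -> 0 <= s <= 1 ->
  eser (fun k => khinchin a t k * s ^+ k) = (F t s)%:E.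
Proof.
move=> t_in s_in; have /andP[t0 t_rho] := t_in; have t_in' : 0 <= t <= rho by rewrite ltW.
have /andP[ts0 ts_le] := mul_itv t_in' s_in.
rewrite (_ : (fun k => _) = fun k => (psum a t)^-1 * (a k * (t * s) ^+ k)); last first.
  by apply/funext => k; rewrite /khinchin exprMn; ring.
rewrite eserZ ?invr_ge0 ?(ltW (psum_gt0 _)) // => [|k]; last by rewrite mulr_ge0 ?exprn_ge0.
by rewrite (eser_psum a_ge0 a_cvg) ?ts0 ?(le_trans ts_le) // -EFinM mulrC.
Qed.

Lemma eser_khinchin t : 0 < t <= rho -> eser (khinchin a t) = 1%:E.
Proof.
move=> t_in; have := eser_khinchin_pow t_in (s := 1).
rewrite lexx ler01 /khinchin_pgf mulr1 divff ?gt_eqF ?psum_gt0 ?pos_itv // => /(_ isT).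
by under eq_fun do rewrite expr1n mulr1.
Qed.

Lemma pgf_khinchin t s : 0 < t <= rho -> 0 <= s <= 1 -> pgf (khinchin a t) s = F t s.
Proof. by move=> t_in s_in; rewrite /pgf eser_khinchin_pow. Qed.

Section Lipschitz.
Variable r : R.
Hypotheses (r_ge0 : 0 <= r) (r_lt_rho : r < rho).

Let itv_rho t : 0 <= t <= r -> 0 <= t <= rho.
Proof. by move=> /andP[t0 tr]; rewrite t0 (le_trans tr) ?ltW. Qed.

Let normr_div_le (x y m P : R) : 0 < m -> m <= P -> `|x| <= y -> `|x / P| <= y / m.
Proof.
move=> m0 mP xy; have P0 := lt_le_trans m0 mP.
rewrite normrM normfV (gtr0_norm P0) ler_pM // ?invr_ge0 ?(ltW P0) //.
by rewrite lef_pV2 ?posrE.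
Qed.

Lemma khinchin_pgf_lipschitz_s :
  exists2 K, 0 <= K & forall t, 0 <= t <= r -> K.-lipschitz_(`[0, 1]) (F t).
Proof.
have [L L0 psum_lip] := psum_lipschitz a_ge0 a_cvg r_ge0 r_lt_rho.
exists (L * r / a 0%N); first by rewrite divr_ge0 ?mulr_ge0 ?(ltW a0_gt0).
move=> t t_in [s s'] /=; rewrite !in_itv /= => -[s_in s'_in].
have /andP[t0 tr] := t_in.
have ts_in u : 0 <= u <= 1 -> t * u \in `[0, r].
  move=> u_in; have /andP[tu0 tu_t] := mul_itv (itv_rho t_in) u_in.
  by rewrite in_itv /= tu0 (le_trans tu_t tr).
rewrite /khinchin_pgf -mulrBl mulrAC; apply: normr_div_le => //.
  exact: psum_ge_a0 a_ge0 a_cvg _ (itv_rho t_in).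
apply: le_trans (psum_lip (t * s, t * s') (conj (ts_in _ s_in) (ts_in _ s'_in))) _.
by rewrite /= -mulrBr normrM (ger0_norm t0) mulrA ler_wpM2r // ler_wpM2l.
Qed.

Lemma khinchin_pgf_lipschitz_t :
  exists2 K, 0 <= K & forall s, 0 <= s <= 1 -> K.-lipschitz_(`[0, r]) (F ^~ s).
Proof.
have [L L0 psum_lip] := psum_lipschitz a_ge0 a_cvg r_ge0 r_lt_rho.
have psum_le_r x : 0 <= x <= r -> psum a x <= psum a r.
  by move=> /andP[x0 xr]; rewrite (psum_le a_ge0 a_cvg x0 xr (ltW r_lt_rho)).
have M0 : 0 <= psum a r by rewrite ltW // psum_gt0 // itv_rho // r_ge0 lexx.
exists (2 * psum a r * L / a 0%N ^+ 2); first by rewrite divr_ge0 ?exprn_ge0 ?mulr_ge0 // ltW.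
move=> s s_in [t t'] /=; rewrite !in_itv /= => -[t_in t'_in].
have ts_in u : 0 <= u <= r -> 0 <= u * s <= r.
  move=> u_in; have /andP[us0 us_u] := mul_itv (itv_rho u_in) s_in.
  by rewrite us0 (le_trans us_u) //; case/andP: u_in.
have lip x y : 0 <= x <= r -> 0 <= y <= r -> `|psum a x - psum a y| <= L * `|x - y|.
  by move=> x_in y_in; apply: (psum_lip (x, y)); rewrite /= !in_itv.
have Pt := psum_gt0 (itv_rho t_in); have Pt' := psum_gt0 (itv_rho t'_in).
have lipA : `|psum a (t * s) - psum a (t' * s)| <= L * `|t - t'|.
  apply: le_trans (lip _ _ (ts_in _ t_in) (ts_in _ t'_in)) _.
  have /andP[s0 s1] := s_in.
  by rewrite -mulrBl normrM ler_wpM2l // (ger0_norm s0) ler_piMr.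
have lipP := lip _ _ t'_in t_in.
have B0 := ltW (psum_gt0 (itv_rho (ts_in _ t'_in))).
have BM := psum_le_r _ (ts_in _ t'_in); have Pt'M := psum_le_r _ t'_in.
have -> : psum a (t * s) / psum a t - psum a (t' * s) / psum a t' =
  ((psum a (t * s) - psum a (t' * s)) * psum a t' + psum a (t' * s) * (psum a t' - psum a t))
  / (psum a t * psum a t').
  by field; rewrite !gt_eqF.
rewrite mulrAC; apply: normr_div_le; first by rewrite exprn_gt0.
  by rewrite expr2 ler_pM ?(ltW a0_gt0) ?(psum_ge_a0 a_ge0 a_cvg) ?itv_rho.
apply: le_trans (ler_normD _ _) _; rewrite !normrM (gtr0_norm Pt') (ger0_norm B0).
rewrite (distrC t') in lipP.
apply: le_trans (lerD (ler_pM _ _ lipA Pt'M) (ler_pM _ _ BM lipP)) _ => //; first exact: ltW.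
lra.
Qed.

Lemma iter_khinchin_pgf_lipschitz n :
  exists2 C, 0 <= C & C.-lipschitz_(`[0, r]) (fun t => iter n (F t) 0).
Proof.
have [K1 K1_ge0 lip_s] := khinchin_pgf_lipschitz_s.
have [K2 K2_ge0 lip_t] := khinchin_pgf_lipschitz_t.
elim: n => [|n [C C_ge0 IH]].
  by exists 0 => // -[t t'] _; rewrite /= subrr normr0 mul0r.
exists (K1 * C + K2); first by rewrite addr_ge0 ?mulr_ge0.
move=> [t t'] /= [t_in t'_in]; move: (t_in) (t'_in); rewrite !in_itv /= => t_in' t'_in'.
have iter_in x : 0 <= x <= r -> iter n (F x) 0 \in `[0, 1].
  by move=> x_in; rewrite in_itv /= iter_khinchin_pgf_itv ?itv_rho.
set u := iter n (F t) 0; set u' := iter n (F t') 0.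
rewrite -(subrKA (F t u')) mulrDl.
apply: le_trans (ler_normD _ _) _; apply: lerD.
  apply: le_trans (lip_s t t_in' (u, u') (conj (iter_in _ t_in') (iter_in _ t'_in'))) _.
  by rewrite -mulrA ler_wpM2l //; exact: (IH (t, t') (conj t_in t'_in)).
have u'_in : 0 <= u' <= 1 by rewrite iter_khinchin_pgf_itv ?itv_rho.
exact: (lip_t u' u'_in (t, t') (conj t_in t'_in)).
Qed.

End Lipschitz.

Let khinchin_pgf_iter_lim_itv t : 0 <= t <= rho -> 0 <= iter_lim (F t) <= 1.
Proof.
by move=> t_in; apply: iter_lim_itv; [apply: khinchin_pgf_itv | apply: khinchin_pgf_homo].
Qed.

Lemma iter_lim_khinchin_pgf0 : iter_lim (F 0) = 1.
Proof.
have zero_in : 0 <= (0 : R) <= rho by rewrite lexx rho_ge0.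
apply/eqP; rewrite eq_le; have /andP[_ ->] := khinchin_pgf_iter_lim_itv zero_in.
have := iter_le_lim (khinchin_pgf_itv zero_in) (khinchin_pgf_homo zero_in) 1.
by rewrite /= khinchin_pgf0.
Qed.

Lemma q_ext_iter_lim t : 0 <= t <= rho -> q_ext a t = iter_lim (F t).
Proof.
move=> t_in; rewrite /q_ext; have [->|t_neq0] := eqVneq t 0.
  by rewrite iter_lim_khinchin_pgf0.
have t_pos : 0 < t <= rho by rewrite lt0r t_neq0.
rewrite /extinction_prob /iter_lim; congr (limn _); apply/funext => n.
rewrite (gen_law_extinction (khinchin_ge0 t_pos) (eser_khinchin t_pos)).
elim: n => //= n ->; rewrite pgf_khinchin //.
exact: iter_khinchin_pgf_itv.
Qed.

Let interpolate_rho t0 : 0 <= t0 -> t0 < rho -> exists r, [/\ 0 <= r, t0 < r & r < rho].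
Proof. by move=> t0_ge0 t0_rho; exists ((t0 + rho) / 2); split; lra. Qed.

Lemma iter_lim_khinchin_lower t0 e : 0 <= t0 < rho -> 0 < e ->
  \forall t \near t0, 0 <= t -> iter_lim (F t0) - e < iter_lim (F t).
Proof.
move=> /andP[t0_ge0 t0_rho] e0; have e2 : 0 < e / 2 by rewrite divr_gt0.
have [r [r_ge0 t0_r r_rho]] := interpolate_rho t0_ge0 t0_rho.
have t0_in : 0 <= t0 <= rho by rewrite t0_ge0 ltW.
have [n lim_lt] := iter_lim_approx (khinchin_pgf_itv t0_in) (khinchin_pgf_homo t0_in) e2.
have [C _ iter_lip] := iter_khinchin_pgf_lipschitz r_ge0 r_rho n.
have t0_in_r : t0 \in `[0, r] by rewrite in_itv /= t0_ge0 ltW.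
move: (lt_nbhsl t0_r) (lipschitz_near iter_lip t0_in_r e2).
apply: filterS2 => t t_r close t_ge0.
have t_in : 0 <= t <= rho by rewrite t_ge0 ltW ?(lt_trans t_r).
have := close; rewrite /= in_itv /= t_ge0 ltW // => /(_ isT).
have := iter_le_lim (khinchin_pgf_itv t_in) (khinchin_pgf_homo t_in) n.
rewrite ltr_distlC => ? /andP[? ?]; lra.
Qed.

Lemma khinchin_pgf_lt_id t0 s : 0 < t0 < rho -> iter_lim (F t0) < s -> s < 1 -> F t0 s < s.
Proof.
move=> /andP[t0_gt0 t0_rho] q_s s1; have t0_pos : 0 < t0 <= rho by rewrite t0_gt0 ltW.
have t0_in := pos_itv t0_pos; set q := iter_lim (F t0).
have /andP[q0 q1] := khinchin_pgf_iter_lim_itv t0_in.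
have s_in : 0 <= s <= 1 by rewrite (le_trans q0) ?ltW.
have [K _ lip_s] := khinchin_pgf_lipschitz_s (ltW t0_gt0) t0_rho.
have fixed : F t0 q = q.
  apply: iter_lim_fixed (khinchin_pgf_itv t0_in) (khinchin_pgf_homo t0_in) _.
  by apply: lipschitz_within_continuous (lip_s t0 _); rewrite (ltW t0_gt0) lexx.
have p0_gt0 : 0 < khinchin a t0 0 by rewrite /khinchin expr0 mulr1 divr_gt0 ?psum_gt0.
rewrite -pgf_khinchin //.
apply: (pgf_lt_id (khinchin_ge0 t0_pos) (eser_khinchin t0_pos) p0_gt0 _ q0 q_s s1).
by rewrite pgf_khinchin // q0 q1.
Qed.

Lemma iter_lim_khinchin_upper t0 e : 0 <= t0 < rho -> 0 < e ->
  \forall t \near t0, 0 <= t -> iter_lim (F t) < iter_lim (F t0) + e.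
Proof.
move=> /andP[t0_ge0 t0_rho] e0; have t0_in : 0 <= t0 <= rho by rewrite t0_ge0 ltW.
have [r [r_ge0 t0_r r_rho]] := interpolate_rho t0_ge0 t0_rho.
have t_in t : t < r -> 0 <= t -> 0 <= t <= rho.
  by move=> t_r t_ge0; rewrite t_ge0 ltW ?(lt_trans t_r).
set q := iter_lim (F t0); have [q_lt1|q_ge1] := ltP q 1; last first.
  apply: filterS (lt_nbhsl t0_r) => t t_r t_ge0.
  by have /andP[_ le1] := khinchin_pgf_iter_lim_itv (t_in t t_r t_ge0); lra.
have t0_gt0 : 0 < t0.
  rewrite lt0r t0_ge0 andbT; apply: contraTneq q_lt1 => t0_eq0.
  by rewrite /q t0_eq0 iter_lim_khinchin_pgf0 ltxx.
pose s := Num.min (q + e / 2) ((q + 1) / 2).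
have [q_s s_lt1 s_le] : [/\ q < s, s < 1 & s <= q + e / 2].
  by rewrite /s lt_min gt_min ge_min lexx; split; lra.
have s_in : 0 <= s <= 1.
  by have /andP[q0 _] := khinchin_pgf_iter_lim_itv t0_in; rewrite (le_trans q0) ?ltW.
have gap : 0 < s - F t0 s by rewrite subr_gt0 khinchin_pgf_lt_id ?t0_gt0.
have [K _ lip_t] := khinchin_pgf_lipschitz_t r_ge0 r_rho.
have t0_in_r : t0 \in `[0, r] by rewrite in_itv /= t0_ge0 ltW.
move: (lt_nbhsl t0_r) (lipschitz_near (lip_t s s_in) t0_in_r gap).
apply: filterS2 => t t_r close t_ge0.
have := close; rewrite /= in_itv /= t_ge0 ltW // ltr_distlC => /(_ isT) /andP[_ Fts].
have t_in' := t_in t t_r t_ge0.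
have := iter_lim_le (khinchin_pgf_itv t_in') (khinchin_pgf_homo t_in') s_in.
by move=> /(_ _); lra.
Qed.

End KhinchinFamily.

Theorem proposition6p5 (R : realType) (a : nat -> R) :
  in_K a -> (0 < ps_radius a)%E ->
  {within [set t : R | 0 <= t /\ (t%:E < ps_radius a)%E], continuous (q_ext a)}.
Proof.
move=> [a_ge0 a0_gt0 _] _; apply/subspace_continuousP => t0 [t0_ge0].
move=> /ereal_sup_gt[_ [rho [rho_ge0 a_cvg] <-]]; rewrite lte_fin => t0_rho.
have t0_in : 0 <= t0 < rho by rewrite t0_ge0.
have q_ext_lim := q_ext_iter_lim a_ge0 a0_gt0 rho_ge0 a_cvg.
apply/cvgrPdist_lt => e e_gt0; rewrite near_withinE.
move: (lt_nbhsl t0_rho) (iter_lim_khinchin_lower a_ge0 a0_gt0 a_cvg t0_in e_gt0)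
  (iter_lim_khinchin_upper a_ge0 a0_gt0 rho_ge0 a_cvg t0_in e_gt0).
apply: filterS3 => t t_rho lower upper [t_ge0 _].
by rewrite /from_subspace !q_ext_lim ?t_ge0 ?t0_ge0 ?ltW // ltr_distlC lower ?upper.
Qed.
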